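(* In the $m$-type setting described in the context, suppose $x_i=x$ for all types $i$. Then diffusion occurs from a small seed if and only if $x>1$.
   Context: There are $m\ge1$ types. $\Pi=(\pi_{ij})$ is a nonnegative row-stochastic primitive $m\times m$ matrix ($\pi_{ij}$ is the probability that a meeting of a type-$i$ agent is with a type-$j$ agent). For each type $i$: $P_i$ is a degree distribution on the nonnegative integers; $w_i(d)>0$ are degree weights; $f_i(d,a)$, $g_i(d,a)$ ($0\le a\le d$) are adoption and abandonment rates satisfying: $f_i(d,0)=0$; $f_i(d,a)$ nondecreasing in $a$; $f_i(d,1)>0$ for some $d$ with $P_i(d)>0$; $g_i(d,0)>0$; $g_i(d,a)$ nonincreasing in $a$. Let $x_i=\sum_dP_i(d)w_i(d)\,d\,\frac{f_i(d,1)}{g_i(d,0)}$, assumed finite; it is positive. $A$ is the $m\times m$ matrix with $A_{ij}=\pi_{ij}x_j$. Diffusion occurs from a small seed means: for every $\varepsilon>0$ there exists $v\in\mathbb{R}^m$ with $0<v_i<\varepsilon$ and $(Av)_i>v_i$ for all $i$. *)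

From HB Require Import structures.
From mathcomp Require Import all_boot all_order all_algebra.
From mathcomp Require Import all_classical all_reals all_analysis.
Set Implicit Arguments. Unset Strict Implicit. Unset Printing Implicit Defensive.
Import Order.TTheory GRing.Theory Num.Theory.
Local Open Scope ring_scope.

Section Defs.
Variable R : realType.

Definition row_stochastic (m : nat) (Pi : 'M[R]_m) : Prop :=
  (forall i j, 0 <= Pi i j) /\ (forall i, \sum_j Pi i j = 1).

Definition mx_primitive (m : nat) (Pi : 'M[R]_m) : Prop :=
  (forall i j, 0 <= Pi i j) /\ exists k : nat, forall i j, 0 < (Pi ^+ k) i j.

Definition Amat (m : nat) (Pi : 'M[R]_m) (x : 'I_m -> R) : 'M[R]_m :=
  \matrix_(i, j) (Pi i j * x j).

Definition diffusion_small_seed (m : nat) (A : 'M[R]_m) : Prop :=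
  forall eps : R, 0 < eps ->
    exists v : 'cV[R]_m,
      forall i, 0 < v i 0 /\ v i 0 < eps /\ (A *m v) i 0 > v i 0.

Definition xterm (P w : nat -> R) (f g : nat -> nat -> R) (d : nat) : R :=
  P d * w d * d%:R * (f d 1%N / g d 0%N).

End Defs.

From HB Require Import structures.
From mathcomp Require Import all_boot all_order all_algebra.
From mathcomp Require Import all_classical all_reals all_analysis.
Import Order.TTheory GRing.Theory Num.Theory numFieldNormedType.Exports.
Local Open Scope classical_set_scope.
Local Open Scope ring_scope.

(* When every x_i equals x, the matrix A is x times the stochastic matrix Pi.
   A stochastic matrix fixes constant vectors, so for x > 1 any small constant
   seed grows.  Conversely, at a coordinate where a positive seed v is maximal,
   (Pi v)_i <= v_i, so (A v)_i > v_i forces x > 1. *)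

Section StochasticScaling.
Variables (R : realType) (m : nat) (Pi : 'M[R]_m).
Hypothesis Pi_stoch : row_stochastic Pi.

Lemma Amat_const (x : R) : Amat Pi (fun=> x) = x *: Pi.
Proof. by apply/matrixP => i j; rewrite !mxE mulrC. Qed.

Lemma row_stochastic_mulmx_const (c : R) : Pi *m const_mx c = const_mx c :> 'cV_m.
Proof.
apply/matrixP => i k; rewrite !mxE.
under eq_bigr do rewrite mxE.
by rewrite -mulr_suml Pi_stoch.2 mul1r.
Qed.

Lemma row_stochastic_mulmx_le_max (v : 'cV[R]_m) (i : 'I_m) :
  (forall j, v j 0 <= v i 0) -> (Pi *m v) i 0 <= v i 0.
Proof.
move=> vi_max; rewrite mxE.
apply: (@le_trans _ _ (\sum_j Pi i j * v i 0)).
  by apply: ler_sum => j _; apply: ler_wpM2l; [exact: Pi_stoch.1 | exact: vi_max].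
by rewrite -mulr_suml Pi_stoch.2 mul1r.
Qed.

Lemma row_stochastic_mulmx_ge0 (v : 'cV[R]_m) (i : 'I_m) :
  (forall j, 0 <= v j 0) -> 0 <= (Pi *m v) i 0.
Proof.
by move=> v_ge0; rewrite mxE; apply: sumr_ge0 => j _; rewrite mulr_ge0 ?Pi_stoch.1.
Qed.

Lemma diffusion_scale_gt1 (x : R) :
  (0 < m)%N -> diffusion_small_seed (x *: Pi) -> 1 < x.
Proof.
move=> m_gt0 /(_ 1 ltr01) [v hv].
have [i _ vi_max] := @arg_maxP _ R _ (Ordinal m_gt0) predT (fun i => v i 0) isT.
have v_ge0 j : 0 <= v j 0 by have [/ltW] := hv j.
have [_ [_]] := hv i; rewrite -scalemxAl mxE.
have Piv_le := @row_stochastic_mulmx_le_max v i (fun j => vi_max j isT).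
have Piv_ge0 := @row_stochastic_mulmx_ge0 v i v_ge0.
apply: contraLR; rewrite -!leNgt => x_le1.
by apply: le_trans Piv_le; rewrite ler_piMl.
Qed.

Lemma gt1_diffusion_scale (x : R) : 1 < x -> diffusion_small_seed (x *: Pi).
Proof.
move=> x_gt1 eps eps_gt0; exists (const_mx (eps / 2)) => i.
have eps2_gt0 : 0 < eps / 2 by rewrite divr_gt0.
rewrite -scalemxAl row_stochastic_mulmx_const !mxE.
by rewrite eps2_gt0 ltr_pdivrMr // ltr_pMr // ltr1n ltr_pMl.
Qed.

End StochasticScaling.

Theorem corollary4 (R : realType) (m : nat) (Pi : 'M[R]_m)
  (P w : 'I_m -> nat -> R) (f g : 'I_m -> nat -> nat -> R)
  (xs : 'I_m -> R) (x : R) :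
  (0 < m)%N ->
  row_stochastic Pi -> mx_primitive Pi ->
  (* P i is a probability distribution on the nonnegative integers *)
  (forall i d, 0 <= P i d) ->
  (forall i, (fun n => \sum_(d < n) P i d) @ \oo --> (1 : R)) ->
  (* positive degree weights *)
  (forall i d, 0 < w i d) ->
  (* adoption / abandonment rates (nonnegative) *)
  (forall i d a, (a <= d)%N -> 0 <= g i d a) ->
  (forall i d, f i d 0%N = 0) ->
  (forall i d a b, (a <= b)%N -> (b <= d)%N -> f i d a <= f i d b) ->
  (forall i, exists d, (1 <= d)%N /\ 0 < P i d /\ 0 < f i d 1%N) ->
  (forall i d, 0 < g i d 0%N) ->
  (forall i d a b, (a <= b)%N -> (b <= d)%N -> g i d b <= g i d a) ->
  (* x_i is the (finite) sum of the series *)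
  (forall i, (fun n => \sum_(d < n) xterm (P i) (w i) (f i) (g i) d) @ \oo --> xs i) ->
  (* all x_i are equal to x *)
  (forall i, xs i = x) ->
  diffusion_small_seed (Amat Pi xs) <-> 1 < x.
Proof.
move=> m_gt0 Pi_stoch _ _ _ _ _ _ _ _ _ _ _ xs_x.
have -> : xs = fun=> x by apply: funext.
rewrite Amat_const; split.
- exact: diffusion_scale_gt1.
- exact: gt1_diffusion_scale.
Qed.
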